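(* Let $N,P>0$ and $L\in\mathbb{Z}_{\ge2}$. If there is a $(P,N,L-1)$-list-decodable code $\mathcal{C}\subset\mathcal{B}^n(\sqrt{nP})$ of rate $R$, then there exists a code $\mathcal{C}'\subset\mathcal{S}^n(0,\sqrt{(n+1)P})\subset\mathbb{R}^{n+1}$ with $|\mathcal{C}'|=|\mathcal{C}|$ (so of rate $R$ asymptotically) which is $\left(P,\frac{nN}{n+1},L-1\right)$-list-decodable in $\mathbb{R}^{n+1}$, i.e. every ball in $\mathbb{R}^{n+1}$ of radius $\sqrt{(n+1)\cdot\frac{nN}{n+1}}=\sqrt{nN}$ contains at most $L-1$ points of $\mathcal{C}'$.
   Context: $\mathcal{B}^m(y,r)$ is the closed Euclidean ball in $\mathbb{R}^m$ of radius $r$ centered at $y$, $\mathcal{B}^m(r)=\mathcal{B}^m(0,r)$, and $\mathcal{S}^{m-1}(0,r)=\{x\in\mathbb{R}^m:\|x\|_2=r\}$. For $P,N>0$, $L\in\mathbb{Z}_{\ge2}$, a finite set $\mathcal{C}\subseteq\mathcal{B}^m(\sqrt{mP})$ is $(P,N,L-1)$-list-decodable if $|\mathcal{C}\cap\mathcal{B}^m(y,\sqrt{mN})|\le L-1$ for every $y\in\mathbb{R}^m$. Its rate is $\frac1m\ln|\mathcal{C}|$. *)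

From HB Require Import structures.
From mathcomp Require Import all_boot all_order all_algebra.
From mathcomp Require Import finmap.
Set Implicit Arguments. Unset Strict Implicit. Unset Printing Implicit Defensive.
Import Order.TTheory GRing.Theory Num.Theory.
Local Open Scope ring_scope.
Local Open Scope fset_scope.

Definition norm2 (R : rcfType) (m : nat) (x : 'rV[R]_m) : R :=
  Num.sqrt (\sum_(i < m) x ord0 i ^+ 2).

Definition list_decodable (R : rcfType) (m : nat) (P N : R) (L : nat)
  (C : {fset 'rV[R]_m}) : Prop :=
  (forall x, x \in C -> norm2 x <= Num.sqrt (m%:R * P)) /\
  (forall y : 'rV[R]_m,
     (#|` [fset x in C | (norm2 (x - y) <= Num.sqrt (m%:R * N))%R] | <= L - 1)%N).

(* Lift each codeword x of B^n(sqrt(nP)) to (sqrt((n+1)P - ||x||^2), x), a point of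
   the sphere of radius sqrt((n+1)P) in R^(n+1).  The lift is injective, and the
   distance from a lifted codeword to any y is at least the distance from x to the
   last n coordinates of y, so a ball of radius sqrt(nN) in R^(n+1) contains no more
   lifted codewords than the corresponding ball in R^n contains codewords. *)
From HB Require Import structures.
From mathcomp Require Import all_boot all_order all_algebra.
From mathcomp Require Import finmap.
Import Order.TTheory GRing.Theory Num.Theory.
Local Open Scope fset_scope.
Local Open Scope ring_scope.

Set Implicit Arguments. Unset Strict Implicit.

Section SquaredNorm.
Variable R : rcfType.

Definition sqnorm m (x : 'rV[R]_m) : R := \sum_(i < m) x ord0 i ^+ 2.

Lemma norm2E m (x : 'rV[R]_m) : norm2 x = Num.sqrt (sqnorm x).
Proof. by []. Qed.

Lemma sqnorm_ge0 m (x : 'rV[R]_m) : 0 <= sqnorm x.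
Proof. by apply: sumr_ge0 => i _; rewrite sqr_ge0. Qed.

Lemma sqnorm_row_mx m1 m2 (u : 'rV[R]_m1) (v : 'rV[R]_m2) :
  sqnorm (row_mx u v) = sqnorm u + sqnorm v.
Proof.
rewrite /sqnorm big_split_ord /=.
by congr (_ + _); apply: eq_bigr => i _; rewrite (row_mxEl, row_mxEr).
Qed.

Lemma sqnorm_const_mx1 (t : R) : sqnorm (const_mx t : 'rV[R]_1) = t ^+ 2.
Proof. by rewrite /sqnorm big_ord1 mxE. Qed.

Lemma norm2_row_mx_ger m1 m2 (u : 'rV[R]_m1) (v : 'rV[R]_m2) :
  norm2 v <= norm2 (row_mx u v).
Proof.
by rewrite !norm2E ler_sqrt ?sqnorm_ge0 // sqnorm_row_mx lerDr sqnorm_ge0.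
Qed.

End SquaredNorm.

Section GraphLift.
Variables (R : rcfType) (m1 m2 : nat) (g : 'rV[R]_m2 -> 'rV[R]_m1).

Definition graph_lift (x : 'rV[R]_m2) : 'rV[R]_(m1 + m2) := row_mx (g x) x.

Lemma graph_lift_inj : injective graph_lift.
Proof. by move=> x y /eq_row_mx[]. Qed.

Lemma norm2_graph_lift_subr_ge x (y : 'rV[R]_(m1 + m2)) :
  norm2 (x - rsubmx y) <= norm2 (graph_lift x - y).
Proof.
by rewrite -[y in graph_lift x - y]hsubmxK /graph_lift opp_row_mx add_row_mx
  norm2_row_mx_ger.
Qed.

Lemma card_ball_graph_lift (C : {fset 'rV[R]_m2}) (y : 'rV[R]_(m1 + m2)) r :
  (#|` [fset z in graph_lift @` C | (norm2 (z - y) <= r)%R]|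
     <= #|` [fset x in C | (norm2 (x - rsubmx y) <= r)%R]|)%N.
Proof.
have ball_sub : [fset z in graph_lift @` C | norm2 (z - y) <= r]
    `<=` graph_lift @` [fset x in C | norm2 (x - rsubmx y) <= r].
  apply/fsubsetP => z; rewrite !inE => /andP[/imfsetP[x /= xC ->] lift_close].
  apply/imfsetP; exists x => //; rewrite !inE xC /=.
  exact: le_trans (norm2_graph_lift_subr_ge x y) lift_close.
apply: leq_trans (fsubset_leq_card ball_sub) _.
by rewrite card_imfset //; exact: graph_lift_inj.
Qed.

End GraphLift.

Section SphereLift.
Variables (R : rcfType) (n : nat) (s : R).

(* The new coordinate comes first: ['rV_(1 + n)] is convertible to ['rV_n.+1],
   whereas ['rV_(n + 1)] is not. *)
Definition sphere_lift : 'rV[R]_n -> 'rV[R]_(1 + n) :=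
  graph_lift (fun x => const_mx (Num.sqrt (s - sqnorm x))).

Lemma norm2_sphere_lift x : sqnorm x <= s -> norm2 (sphere_lift x) = Num.sqrt s.
Proof.
move=> x_in; rewrite norm2E sqnorm_row_mx sqnorm_const_mx1.
by rewrite sqr_sqrtr ?subr_ge0 // subrK.
Qed.

End SphereLift.

Theorem mainTheorem3 (R : rcfType) (n : nat) (P N : R) (L : nat) :
  0 < P -> 0 < N -> (2 <= L)%N ->
  forall C : {fset 'rV[R]_n}, list_decodable P N L C ->
  exists C' : {fset 'rV[R]_n.+1},
    (forall x, x \in C' -> norm2 x = Num.sqrt (n.+1%:R * P)) /\
    #|` C'| = #|` C| /\
    list_decodable P (n%:R * N / n.+1%:R) L C'.
Proof.
move=> P_gt0 _ _ C [C_in C_ball].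
have C_sqnorm x : x \in C -> sqnorm x <= n.+1%:R * P.
  move=> /C_in; rewrite norm2E ler_sqrt => [x_in|]; last exact/mulr_ge0/ltW.
  by apply: le_trans x_in _; rewrite ler_pM2r // ler_nat.
have on_sphere x : x \in sphere_lift (n.+1%:R * P) @` C ->
    norm2 x = Num.sqrt (n.+1%:R * P).
  by move=> /imfsetP[z /= zC ->]; rewrite norm2_sphere_lift ?C_sqnorm.
exists (sphere_lift (n.+1%:R * P) @` C); split; last split.
- exact: on_sphere.
- apply: card_imfset; exact: (@graph_lift_inj R 1 n).
split=> [x /on_sphere -> // | y].
rewrite mulrCA mulfV ?mulr1 ?pnatr_eq0 //.
exact: leq_trans (card_ball_graph_lift _ C (y : 'rV_(1 + n)) _) (C_ball _).
Qed.
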